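(* Let $\mathcal S$ be a finite poset, $\chi=(\chi_i)_{i\in\mathcal S}\in\mathbb R_+^{|\mathcal S|}$, and let $\mathcal U=(U;U_i)_{i\in\mathcal S}$ be an indecomposable $\chi$-representation of $\mathcal S$. Then the subspace representation $F(\mathcal U)$ is $\chi$-stable.
   Context: A unitary representation of a finite poset $\mathcal S$ is a tuple $(U;U_i)_{i\in\mathcal S}$ of a finite-dimensional complex unitary space $U$ and subspaces $U_i$ with $U_i\subseteq U_j$ whenever $i\prec j$. It is a $\chi$-representation if $\sum_{i\in\mathcal S}\chi_iP_{U_i}=\mathbb 1$, where $P_{U_i}$ is the orthogonal projection onto $U_i$. It is indecomposable if it is not unitarily equivalent to an orthogonal sum $(U'\perp U'';U'_i\perp U''_i)$ of two nonzero unitary representations. $F(\mathcal U)$ is the underlying subspace representation (forgetting the inner product). A subspace representation $(V;V_i)_{i\in\mathcal S}$ is $\chi$-stable if $\sum_{i\in\mathcal S}\chi_i\dim V_i=\dim V$ and $\sum_{i\in\mathcal S}\chi_i\dim(V_i\cap M)<\dim M$ for every subspace $M$ with $0\neq M\subsetneq V$. *)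

From HB Require Import structures.
From mathcomp Require Import all_boot all_order all_algebra.
From mathcomp Require Import reals.
From mathcomp.real_closed Require Import complex.
Set Implicit Arguments. Unset Strict Implicit. Unset Printing Implicit Defensive.
Import Order.TTheory GRing.Theory Num.Theory.
Local Open Scope ring_scope.

(* The unitary space U is C^n = 'rV[R[i]]_n with the standard inner product
   <u, v> = u *m (v^H), and a subspace is the row space of a matrix 'M_n. *)

Definition adjmx (R : realType) m n (A : 'M[R[i]]_(m, n)) : 'M[R[i]]_(n, m) :=
  (map_mx Num.conj A)^T.

(* Orthogonal projection onto the row space of A (row-vector convention:
   v |-> v *m orthproj A).  With B a basis of the rows of A,
   P = B^H (B B^H)^{-1} B. *)
Definition orthproj (R : realType) n (A : 'M[R[i]]_n) : 'M[R[i]]_n :=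
  let B := row_base A in adjmx B *m invmx (B *m adjmx B) *m B.

Definition unitary_rep (R : realType) (d : Order.disp_t) (S : finPOrderType d)
  n (U : S -> 'M[R[i]]_n) : Prop :=
  forall i j : S, (i <= j)%O -> (U i <= U j)%MS.

Definition chi_rep (R : realType) (d : Order.disp_t) (S : finPOrderType d)
  (chi : S -> R) n (U : S -> 'M[R[i]]_n) : Prop :=
  unitary_rep U /\ \sum_(i : S) ((chi i)%:C)%C *: orthproj (U i) = 1%:M.

(* Decomposable: unitarily equivalent (via a unitary W : C^n -> C^(n1+n2))
   to an orthogonal sum of two nonzero unitary representations
   (C^n1; A_i) _|_ (C^n2; B_i), i.e. W maps U_i onto A_i (+) B_i. *)
Definition decomposable (R : realType) (d : Order.disp_t) (S : finPOrderType d)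
  n (U : S -> 'M[R[i]]_n) : Prop :=
  exists n1 n2 : nat, exists (W : 'M[R[i]]_(n, n1 + n2)),
  exists (A : S -> 'M[R[i]]_n1) (B : S -> 'M[R[i]]_n2),
    [/\ (0 < n1)%N, (0 < n2)%N,
        W *m adjmx W = 1%:M /\ adjmx W *m W = 1%:M,
        unitary_rep A /\ unitary_rep B &
        forall i, (U i *m W :=: block_mx (A i) 0 0 (B i))%MS].

Definition indecomposable (R : realType) (d : Order.disp_t) (S : finPOrderType d)
  n (U : S -> 'M[R[i]]_n) : Prop := ~ decomposable U.

(* chi-stability of the underlying subspace representation (C^n; U_i). *)
Definition chi_stable (R : realType) (d : Order.disp_t) (S : finPOrderType d)
  (chi : S -> R) n (U : S -> 'M[R[i]]_n) : Prop :=
  \sum_(i : S) chi i * (\rank (U i))%:R = n%:R /\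
  forall M : 'M[R[i]]_n, (0 < \rank M)%N -> (\rank M < n)%N ->
    \sum_(i : S) chi i * (\rank (U i :&: M)%MS)%:R < (\rank M)%:R.

(* Let Q, P_i and K_i be the orthogonal projections onto M, U_i and U_i ∩ M.
   Since Q P_i Q = K_i + (P_i Q - K_i)^* (P_i Q - K_i), taking the trace of
   Q (Σ χ_i P_i) Q = Q gives
     rank M = Σ χ_i rank (U_i ∩ M) + Σ χ_i ||P_i Q - K_i||²,
   so the stability inequality can only fail if P_i Q = K_i for every i.
   Then every P_i commutes with Q, each U_i splits as (U_i ∩ M) ⊕ (U_i ∩ M^⊥),
   and an orthonormal basis adapted to M ⊕ M^⊥ decomposes the representation.
   The equality Σ χ_i dim U_i = n is the trace of the χ-relation itself. *)
From HB Require Import structures.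
From mathcomp Require Import all_boot all_order all_algebra.
From mathcomp Require Import reals.
From mathcomp.real_closed Require Import complex.
Import Order.TTheory GRing.Theory Num.Theory Num.Def.
Set Implicit Arguments. Unset Strict Implicit. Unset Printing Implicit Defensive.
Local Open Scope ring_scope.

Lemma eqmx_row_mx0 (F : fieldType) m1 m2 n k (X : 'M[F]_(m1, n))
    (Y : 'M[F]_(m2, n)) :
  (X :=: Y)%MS -> (row_mx X (0 : 'M_(m1, k)) :=: row_mx Y (0 : 'M_(m2, k)))%MS.
Proof.
have e m (Z : 'M[F]_(m, n)) : row_mx Z (0 : 'M_(m, k)) = Z *m row_mx 1%:M 0.
  by rewrite mul_mx_row mulmx1 mulmx0.
by rewrite (e _ X) (e _ Y); apply: eqmxMr.
Qed.

Lemma eqmx_row_0mx (F : fieldType) m1 m2 n k (X : 'M[F]_(m1, n))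
    (Y : 'M[F]_(m2, n)) :
  (X :=: Y)%MS -> (row_mx (0 : 'M_(m1, k)) X :=: row_mx (0 : 'M_(m2, k)) Y)%MS.
Proof.
have e m (Z : 'M[F]_(m, n)) : row_mx (0 : 'M_(m, k)) Z = Z *m row_mx 0 1%:M.
  by rewrite mul_mx_row mulmx1 mulmx0.
by rewrite (e _ X) (e _ Y); apply: eqmxMr.
Qed.

Section UnitarySpace.
Variable R : realType.
Local Notation C := (R[i] : numClosedFieldType).

Local Notation "B ^!" :=
  (orthomx conjC (mx_of_hermitian (hermitian1mx _)) B) : matrix_set_scope.

Lemma adjmxE m n (A : 'M[C]_(m, n)) : adjmx A = map_mx conjC A^T.
Proof. by rewrite /adjmx map_trmx. Qed.

Lemma adjmxM m n p (A : 'M[C]_(m, n)) (B : 'M[C]_(n, p)) :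
  adjmx (A *m B) = adjmx B *m adjmx A.
Proof. by rewrite /adjmx map_mxM trmx_mul. Qed.

Lemma adjmxK m n (A : 'M[C]_(m, n)) : adjmx (adjmx A) = A.
Proof. by apply/matrixP => i j; rewrite !mxE conjCK. Qed.

Lemma adjmxB m n (A B : 'M[C]_(m, n)) : adjmx (A - B) = adjmx A - adjmx B.
Proof. by apply/matrixP => i j; rewrite !mxE rmorphB. Qed.

Lemma adjmx_col m1 m2 n (A : 'M[C]_(m1, n)) (B : 'M[C]_(m2, n)) :
  adjmx (col_mx A B) = row_mx (adjmx A) (adjmx B).
Proof. by rewrite /adjmx map_col_mx tr_col_mx. Qed.

Lemma mulmx_adjmx_unitary m n (E : 'M[C]_(m, n)) :
  E \is unitarymx -> E *m adjmx E = 1%:M.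
Proof. by rewrite adjmxE => /unitarymxP. Qed.

Lemma adjmx_mul_unitary m n (E : 'M[C]_(m, n)) :
  (n <= m)%N -> E \is unitarymx -> adjmx E *m E = 1%:M.
Proof.
move=> le_nm Eu; have EEt := mulmx_adjmx_unitary Eu.
have Et_free : row_free (adjmx E).
  rewrite /row_free adjmxE mxrank_map mxrank_tr mxrank_unitary //.
  by rewrite eqn_leq le_nm -(mxrank_unitary Eu) rank_leq_col.
apply/eqP; rewrite -subr_eq0 -(mulmx_free_eq0 _ Et_free).
by rewrite mulmxBl -mulmxA EEt mulmx1 mul1mx subrr.
Qed.

Lemma orthomx_adjmxP m p n (X : 'M[C]_(m, n)) (M : 'M[C]_(p, n)) :
  reflect (X *m adjmx M = 0) (X <= M^!)%MS.
Proof. by rewrite adjmxE; apply: orthomx1P. Qed.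

Lemma orthomx_adjmx_sub m p q n (X : 'M[C]_(m, n)) (Y : 'M[C]_(q, n))
    (M : 'M[C]_(p, n)) :
  (X <= M^!)%MS -> (Y <= M)%MS -> X *m adjmx Y = 0.
Proof.
by move=> /orthomx_adjmxP XM /submxP [D ->]; rewrite adjmxM mulmxA XM mul0mx.
Qed.

Lemma sub_orthomx_adjmx m p q n (X : 'M[C]_(m, n)) (Y : 'M[C]_(q, n))
    (M : 'M[C]_(p, n)) :
  (X <= M)%MS -> (Y <= M^!)%MS -> X *m adjmx Y = 0.
Proof.
move=> XM YM; rewrite -[X]adjmxK -adjmxM (orthomx_adjmx_sub YM XM).
by apply/matrixP => i j; rewrite !mxE rmorph0.
Qed.

Definition onbasis m n (A : 'M[C]_(m, n)) := schmidt (row_base A).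

Lemma onbasis_unitary m n (A : 'M[C]_(m, n)) : onbasis A \is unitarymx.
Proof. by apply: schmidt_unitarymx; rewrite rank_leq_col. Qed.

Lemma eqmx_onbasis m n (A : 'M[C]_(m, n)) : (onbasis A :=: A)%MS.
Proof.
exact: eqmx_trans (eqmx_schmidt_free (row_base_free A)) (eq_row_base A).
Qed.

(* With B = D E for the orthonormal basis E, the Gram matrix B B^* is D D^*. *)
Lemma orthprojE n (A : 'M[C]_n) : orthproj A = adjmx (onbasis A) *m onbasis A.
Proof.
rewrite /orthproj; set B := row_base A; set E := onbasis A.
have EEt : E *m adjmx E = 1%:M by apply: mulmx_adjmx_unitary; apply: onbasis_unitary.
have [D BE] : exists D, B = D *m E.
  by apply/submxP; rewrite (eqmx_onbasis A) -(eq_row_base A).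
have Du : D \in unitmx.
  have : (\rank B <= \rank D)%N by rewrite {1}BE mxrankM_maxl.
  rewrite (eqP (row_base_free A)) -row_free_unit /row_free eqn_leq => ->.
  by rewrite rank_leq_row.
have Dtu : adjmx D \in unitmx by rewrite adjmxE map_unitmx unitmx_tr.
have -> : B *m adjmx B = D *m adjmx D.
  by rewrite BE adjmxM mulmxA -(mulmxA D) EEt mulmx1.
have Gu : D *m adjmx D \in unitmx by rewrite unitmx_mul Du Dtu.
have DtGD : adjmx D *m invmx (D *m adjmx D) *m D = 1%:M.
  have DX : D *m (adjmx D *m invmx (D *m adjmx D) *m D) = D.
    by rewrite !mulmxA mulmxV // mul1mx.
  by rewrite -(mulKmx Du (_ *m D)) DX mulVmx.
rewrite BE adjmxM -!mulmxA (mulmxA (adjmx D)) (mulmxA (_ *m _)) DtGD.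
by rewrite mul1mx.
Qed.

Lemma adjmx_orthproj n (A : 'M[C]_n) : adjmx (orthproj A) = orthproj A.
Proof. by rewrite orthprojE adjmxM adjmxK. Qed.

Lemma orthproj_idem n (A : 'M[C]_n) : orthproj A *m orthproj A = orthproj A.
Proof.
rewrite orthprojE -mulmxA (mulmxA (onbasis A)).
by rewrite mulmx_adjmx_unitary ?onbasis_unitary // mul1mx.
Qed.

Lemma orthproj_id m n (A : 'M[C]_n) (X : 'M[C]_(m, n)) :
  (X <= A)%MS -> X *m orthproj A = X.
Proof.
rewrite -(eqmx_onbasis A) => /submxP [D ->].
by rewrite orthprojE mulmxA -(mulmxA D) mulmx_adjmx_unitary ?onbasis_unitary ?mulmx1.
Qed.

Lemma orthproj_sub m n (A : 'M[C]_n) (X : 'M[C]_(m, n)) :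
  (X *m orthproj A <= A)%MS.
Proof. by rewrite orthprojE mulmxA -(eqmx_onbasis A) submxMl. Qed.

Lemma orthproj_compl_ortho m n (A : 'M[C]_n) (X : 'M[C]_(m, n)) :
  (X - X *m orthproj A <= A^!)%MS.
Proof.
rewrite -(eqmx_ortho _ (eqmx_onbasis A)); apply/orthomx_adjmxP.
rewrite mulmxBl orthprojE -!mulmxA mulmx_adjmx_unitary ?onbasis_unitary //.
by rewrite mulmx1 subrr.
Qed.

Lemma mxtrace_orthproj n (A : 'M[C]_n) : \tr (orthproj A) = (\rank A)%:R.
Proof.
by rewrite orthprojE mxtrace_mulC mulmx_adjmx_unitary ?onbasis_unitary ?mxtrace1.
Qed.

Definition frob2 m n (X : 'M[C]_(m, n)) := \tr (adjmx X *m X).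

Lemma frob2E m n (X : 'M[C]_(m, n)) : frob2 X = \sum_j \sum_i `|X i j| ^+ 2.
Proof.
apply: eq_bigr => j _; rewrite mxE.
by apply: eq_bigr => i _; rewrite !mxE normCK mulrC.
Qed.

Lemma frob2_ge0 m n (X : 'M[C]_(m, n)) : 0 <= frob2 X.
Proof. by rewrite frob2E; do 2!(apply: sumr_ge0 => ? _); apply: exprn_ge0. Qed.

Lemma frob2_eq0 m n (X : 'M[C]_(m, n)) : frob2 X = 0 -> X = 0.
Proof.
rewrite frob2E => X0; apply/matrixP => i j; rewrite mxE.
have sq_ge0 k l : 0 <= `|X k l| ^+ 2 by apply: exprn_ge0.
have col0 := psumr_eq0P (fun l _ => sumr_ge0 _ (fun k _ => sq_ge0 k l)) X0 (i := j) isT.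
have /eqP := psumr_eq0P (fun k _ => sq_ge0 k j) col0 (i := i) isT.
by rewrite expf_eq0 normr_eq0 => /eqP.
Qed.

(* Q P Q - K = (P Q - K)^* (P Q - K), as P, Q, K are orthogonal projections
   with K P = K Q = K. *)
Lemma mxtrace_orthproj_cap n (U M : 'M[C]_n) :
  \tr (orthproj M *m orthproj U *m orthproj M) =
  (\rank (U :&: M)%MS)%:R +
    frob2 (orthproj U *m orthproj M - orthproj (U :&: M)%MS).
Proof.
set P := orthproj U; set Q := orthproj M; set K := orthproj (U :&: M)%MS.
have K_sub : (K <= U :&: M)%MS by rewrite -[K]mul1mx orthproj_sub.
have KP : K *m P = K by rewrite orthproj_id // (submx_trans K_sub) ?capmxSl.
have KQ : K *m Q = K by rewrite orthproj_id // (submx_trans K_sub) ?capmxSr.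
have PK : P *m K = K by rewrite -[P]adjmx_orthproj -[K]adjmx_orthproj -adjmxM KP.
have QK : Q *m K = K by rewrite -[Q]adjmx_orthproj -[K]adjmx_orthproj -adjmxM KQ.
rewrite /frob2 adjmxB adjmxM !adjmx_orthproj -/P -/Q -/K mulmxBl !mulmxBr.
have QPPQ : Q *m P *m (P *m Q) = Q *m P *m Q.
  by rewrite mulmxA -(mulmxA Q) orthproj_idem.
have QPK : Q *m P *m K = K by rewrite -mulmxA PK QK.
have KPQ : K *m (P *m Q) = K by rewrite mulmxA KP KQ.
rewrite QPPQ QPK KPQ orthproj_idem subrr subr0 raddfB /=.
by rewrite -mxtrace_orthproj -/K addrC subrK.
Qed.

Lemma orthproj_comm_capmx_split n (V M : 'M[C]_n) :
  orthproj V *m orthproj M = orthproj M *m orthproj V ->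
  (V :=: (V :&: M) + (V :&: M^!))%MS.
Proof.
set P := orthproj V; set Q := orthproj M => PQ.
have VP : V *m P = V by apply: orthproj_id.
have VQ_cap : (V *m Q <= V :&: M)%MS.
  by rewrite sub_capmx orthproj_sub -{1}VP -mulmxA PQ mulmxA orthproj_sub.
have VQ'_cap : (V - V *m Q <= V :&: M^!)%MS.
  rewrite sub_capmx orthproj_compl_ortho andbT.
  have -> : V - V *m Q = (V - V *m Q) *m P.
    by rewrite mulmxBl -mulmxA -PQ (mulmxA V P) VP.
  exact: orthproj_sub.
apply/eqmxP/andP; split; last by rewrite addsmx_sub !capmxSl.
by rewrite -{1}[V](subrK (V *m Q)) addrC addmx_sub_adds.
Qed.

(* Change coordinates to an orthonormal basis adapted to M (+) M^!; then U_i
   becomes the block (U_i :&: M) (+) (U_i :&: M^!). *)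
Lemma decomposable_orthproj_comm (d : Order.disp_t) (S : finPOrderType d) n
    (U : S -> 'M[C]_n) (M : 'M[C]_n) :
  unitary_rep U -> (0 < \rank M)%N -> (\rank M < n)%N ->
  (forall i, orthproj (U i) *m orthproj M = orthproj M *m orthproj (U i)) ->
  decomposable U.
Proof.
move=> Urep rM_gt0 rM_lt comm.
set E1 := onbasis M; set E2 := onbasis M^!%MS.
have Eu : col_mx E1 E2 \is unitarymx := schmidt_complete_unitarymx M.
exists (\rank M), (\rank M^!%MS), (adjmx (col_mx E1 E2)),
  (fun i => <<(U i :&: M) *m adjmx E1>>%MS),
  (fun i => <<(U i :&: M^!) *m adjmx E2>>%MS).
split=> //.
- by rewrite rank_ortho subn_gt0.
- rewrite adjmxK mulmx_adjmx_unitary // adjmx_mul_unitary //.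
  by rewrite add_rank_ortho.
- by split=> i j le_ij; rewrite !genmxE submxMr // capmxS // Urep.
move=> i; rewrite adjmx_col block_mxEv.
have M_E2 : (U i :&: M)%MS *m adjmx E2 = 0.
  by apply: (sub_orthomx_adjmx (M := M)); rewrite ?capmxSr ?eqmx_onbasis.
have M'_E1 : (U i :&: M^!)%MS *m adjmx E1 = 0.
  by apply: (orthomx_adjmx_sub (M := M)); rewrite ?capmxSr ?eqmx_onbasis.
apply: eqmx_trans (eqmxMr _ (orthproj_comm_capmx_split (comm i))) _.
apply: eqmx_trans (addsmxMr _ _ _) _.
rewrite !mul_mx_row M_E2 M'_E1.
apply: eqmx_trans (adds_eqmx (eqmx_row_mx0 _ (eqmx_sym (genmxE _)))
                             (eqmx_row_0mx _ (eqmx_sym (genmxE _)))) _.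
exact: addsmxE.
Qed.

End UnitarySpace.

Section ChiRepresentation.
Variables (R : realType) (d : Order.disp_t) (S : finPOrderType d).
Variables (chi : S -> R) (n : nat) (U : S -> 'M[R[i]]_n).
Hypothesis Uchi : chi_rep chi U.

Lemma chi_rep_rank_sum : \sum_i chi i * (\rank (U i))%:R = n%:R.
Proof.
apply: (fmorph_inj (real_complex R)); rewrite rmorph_sum rmorph_nat.
rewrite -[n%:R]mxtrace1 -(proj2 Uchi) raddf_sum /=; apply: eq_bigr => i _.
by rewrite mxtraceZ mxtrace_orthproj rmorphM rmorph_nat.
Qed.

(* The trace of Q (sum_i chi_i P_i) Q = Q. *)
Lemma chi_rep_rank_capE (M : 'M[R[i]]_n) :
  (\rank M)%:R = (\sum_i chi i * (\rank (U i :&: M)%MS)%:R)%:C%C +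
    \sum_i (chi i)%:C%C *
      frob2 (orthproj (U i) *m orthproj M - orthproj (U i :&: M)%MS).
Proof.
have QQ : orthproj M = orthproj M *m 1%:M *m orthproj M.
  by rewrite mulmx1 orthproj_idem.
rewrite -mxtrace_orthproj {1}QQ -(proj2 Uchi) mulmx_sumr mulmx_suml raddf_sum.
rewrite rmorph_sum -big_split /=; apply: eq_bigr => i _.
rewrite -scalemxAr -scalemxAl mxtraceZ mxtrace_orthproj_cap rmorphM rmorph_nat.
by rewrite mulrDr.
Qed.

Lemma chi_rep_orthproj_comm (M : 'M[R[i]]_n) :
  (forall i, 0 < chi i) ->
  (\rank M)%:R <= \sum_i chi i * (\rank (U i :&: M)%MS)%:R ->
  forall i, orthproj (U i) *m orthproj M = orthproj M *m orthproj (U i).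
Proof.
move=> chi_gt0 le_rank i.
have c_gt0 j : 0 < (chi j)%:C%C :> R[i] by rewrite ltcR.
have term_ge0 j : 0 <= (chi j)%:C%C *
    frob2 (orthproj (U j) *m orthproj M - orthproj (U j :&: M)%MS).
  by rewrite mulr_ge0 ?frob2_ge0 ?ltW.
have defects0 : \sum_j (chi j)%:C%C *
    frob2 (orthproj (U j) *m orthproj M - orthproj (U j :&: M)%MS) = 0.
  apply/eqP; rewrite eq_le sumr_ge0 // andbT.
  rewrite -(lerD2l (\sum_j chi j * (\rank (U j :&: M)%MS)%:R)%:C%C) addr0.
  by rewrite -chi_rep_rank_capE -(rmorph_nat (real_complex R)) lecR.
have PQ : orthproj (U i) *m orthproj M = orthproj (U i :&: M)%MS.
  apply/eqP; rewrite -subr_eq0; apply/eqP/frob2_eq0.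
  have /eqP := psumr_eq0P (fun j _ => term_ge0 j) defects0 (i := i) isT.
  by rewrite mulf_eq0 gt_eqF // => /eqP.
have := congr1 (@adjmx R _ _) PQ; rewrite adjmxM !adjmx_orthproj => QP.
by rewrite PQ QP.
Qed.

End ChiRepresentation.

Theorem lemma2 (R : realType) (d : Order.disp_t) (S : finPOrderType d)
  (chi : S -> R) (n : nat) (U : S -> 'M[R[i]]_n) :
  (forall i, 0 < chi i) ->
  chi_rep chi U -> indecomposable U ->
  chi_stable chi U.
Proof.
move=> chi_gt0 Uchi Uind; split; first exact: chi_rep_rank_sum.
move=> M rM_gt0 rM_lt; rewrite ltNge; apply/negP => le_rank.
apply: Uind; apply: (decomposable_orthproj_comm (proj1 Uchi) rM_gt0 rM_lt).
move=> i; exact: (chi_rep_orthproj_comm Uchi chi_gt0 le_rank i).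
Qed.
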